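(* Let $T$ be a finite rooted tree in which every inner node has at least two children, with node set $V$ and leaf set $L$. Let $A,B$ be two disjoint subsets of $L$ and let $S,S'\subseteq V\setminus L$. If $(A,B)$ identifies both $S$ and $S'$, then $S=S'$.
   Context: A pair $(\pi,\sigma)$ of injective maps from $S\subseteq V\setminus L$ to $L$ identifies $S$ if for each $s\in S$, $s$ is the least common ancestor of $\pi(s)$ and $\sigma(s)$ (every node is its own ancestor). For $s\in S$, a node $x$ is $s$-requested in $(\pi,\sigma)$ if $x$ lies on the path of $T$ from $\pi(s)$ to $\sigma(s)$; the pair has unique request if every node is $s$-requested for at most one $s\in S$. A pair $(A,B)$ of disjoint subsets of $L$ identifies $S$ if there is a pair $(\pi,\sigma)$ of injective maps $S\to L$ identifying $S$ with unique request such that $\pi(S)=A$ and $\sigma(S)=B$. *)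

From mathcomp Require Import all_boot.
Set Implicit Arguments. Unset Strict Implicit. Unset Printing Implicit Defensive.

Definition rooted_tree (T : finType) (r : T) (par : T -> T) : Prop :=
  par r = r /\ forall x : T, exists k, iter k par x = r.

(* x is an ancestor of y (every node is its own ancestor). *)
Definition ancestor (T : finType) (par : T -> T) (x y : T) : Prop :=
  exists k, iter k par y = x.

Definition children (T : finType) (r : T) (par : T -> T) (x : T) : {set T} :=
  [set y | (par y == x) && (y != x)].

Definition leaves (T : finType) (r : T) (par : T -> T) : {set T} :=
  [set x | children r par x == set0].

Definition inner_branching (T : finType) (r : T) (par : T -> T) : Prop :=
  forall x : T, x \notin leaves r par -> 2 <= #|children r par x|.

Definition is_lca (T : finType) (par : T -> T) (s a b : T) : Prop :=
  ancestor par s a /\ ancestor par s b /\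
  forall z, ancestor par z a -> ancestor par z b -> ancestor par z s.

(* x lies on the tree path between a and b *)
Definition on_path (T : finType) (par : T -> T) (a b x : T) : Prop :=
  (ancestor par x a \/ ancestor par x b) /\
  forall z, ancestor par z a -> ancestor par z b -> ancestor par z x.

(* (pi, sigma) : S -> L injective, identifying S, with unique request *)
Definition pair_identifies (T : finType) (r : T) (par : T -> T)
    (pi sigma : T -> T) (S : {set T}) : Prop :=
  {in S, forall s, pi s \in leaves r par} /\
  {in S, forall s, sigma s \in leaves r par} /\
  {in S &, injective pi} /\ {in S &, injective sigma} /\
  {in S, forall s, is_lca par s (pi s) (sigma s)} /\
  (forall x s1 s2, s1 \in S -> s2 \in S ->
        on_path par (pi s1) (sigma s1) x -> on_path par (pi s2) (sigma s2) x ->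
        s1 = s2).

Definition sets_identify (T : finType) (r : T) (par : T -> T)
    (A B S : {set T}) : Prop :=
  exists pi sigma : T -> T,
    pair_identifies r par pi sigma S /\ pi @: S = A /\ sigma @: S = B.

From mathcomp Require Import all_boot zify.
Set Implicit Arguments. Unset Strict Implicit. Unset Printing Implicit Defensive.

(* Unique request means that the edge from a node c to its parent lies on the
   path of at most one s in S; hence |A ∩ T_c| - |B ∩ T_c|, where T_c is the
   subtree below c, is nonzero exactly when one identifying path leaves T_c.
   The path of s leaves the subtrees of the two children of s towards pi(s)
   and sigma(s); conversely, if the edges above two distinct children of v are
   both crossed, they are crossed by the same path, whose top is v.  So S is
   the set of nodes having two children with unbalanced subtrees, which
   depends on (A, B) only. *)

Lemma cards_neq_symdiff (T : finType) (P Q : {set T}) :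
  #|(P :\: Q) :|: (Q :\: P)| <= 1 ->
  (#|P| != #|Q|) = ((P :\: Q) :|: (Q :\: P) != set0).
Proof.
have disjPQ : (P :\: Q) :&: (Q :\: P) = set0.
  by apply/setP => x; rewrite !inE; case: (x \in P); case: (x \in Q).
rewrite -cards_eq0 cardsU disjPQ cards0 subn0.
rewrite -(cardsID Q P) -(cardsID P Q) setIC; lia.
Qed.

Lemma card_imsetI (aT rT : finType) (f : aT -> rT) (D : {set aT}) (B : {set rT}) :
  {in D &, injective f} -> #|f @: D :&: B| = #|[set x in D | f x \in B]|.
Proof.
move=> injf; rewrite -(@card_in_imset _ _ f) => [|x y]; last first.
  by rewrite !inE => /andP[xD _] /andP[yD _]; apply: injf.
apply: eq_card => y; rewrite inE; apply/andP/imsetP.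
- by case=> /imsetP[x xD ->] fxB; exists x; rewrite // inE xD.
- by case=> x; rewrite inE => /andP[xD fxB] ->; rewrite imset_f.
Qed.

Section Ancestors.
Variables (T : finType) (r : T) (par : T -> T).
Local Notation anc := (ancestor par).

Lemma ancestorP x y : reflect (anc x y) (fconnect par y x).
Proof.
apply: (iffP idP) => [/iter_findex <-|[k <-]]; last exact: fconnect_iter.
by exists (findex par y x).
Qed.

Lemma ancestor_par x : anc (par x) x. Proof. by exists 1. Qed.

Lemma ancestor_trans y x z : anc x y -> anc y z -> anc x z.
Proof. by move=> [m <-] [k <-]; exists (m + k); rewrite iterD. Qed.

Lemma ancestor_total x z y : anc x y -> anc z y -> anc x z \/ anc z x.
Proof.
move=> [k <-] [m <-]; case: (leqP k m) => [le_km|/ltnW le_mk].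
- by right; exists (m - k); rewrite -iterD subnK.
- by left; exists (k - m); rewrite -iterD subnK.
Qed.

Lemma ancestor_par_strict z c : anc z c -> z <> c -> anc z (par c).
Proof. by move=> [[|k] <-] // _; exists k; rewrite iterSr. Qed.

Lemma child_toward x y : anc x y -> x <> y ->
  exists2 c, c \in children r par x & anc c y.
Proof.
move=> [k]; elim: k y => [|k IHk] y /= def_x neq_xy; first by case: neq_xy.
have [eq_kx|neq_kx] := eqVneq (iter k par y) x; first exact: IHk.
by exists (iter k par y); [rewrite inE def_x eqxx | exists k].
Qed.

End Ancestors.

Section RootedTree.
Variables (T : finType) (r : T) (par : T -> T).
Hypothesis tree : rooted_tree r par.
Local Notation anc := (ancestor par).

Lemma iter_par_root k : iter k par r = r.
Proof. by case: tree => par_r _; elim: k => //= k ->. Qed.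

Lemma periodic_is_root n x : 0 < n -> iter n par x = x -> x = r.
Proof.
move=> n_gt0 periodic; case: tree => _ /(_ x) [k reach_r].
have iter_mul j : iter (j * n) par x = x.
  by elim: j => // j IHj; rewrite mulSn iterD IHj periodic.
by rewrite -(iter_mul k) -(subnK (leq_pmulr k n_gt0)) iterD reach_r iter_par_root.
Qed.

Lemma ancestor_antisym x y : anc x y -> anc y x -> x = y.
Proof.
move=> [[|a] iter_a] [b iter_b]; first by rewrite -iter_a.
have /periodic_is_root eq_xr : iter (a.+1 + b) par x = x by rewrite iterD iter_b.
by move: iter_b; rewrite eq_xr // iter_par_root.
Qed.

Lemma child_not_ancestor c x : c \in children r par x -> ~ anc c x.
Proof.
rewrite inE => /andP[/eqP par_c /eqP neq_cx] anc_cx.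
by apply: neq_cx; apply: ancestor_antisym anc_cx _; rewrite -par_c; apply: ancestor_par.
Qed.

Lemma children_disjoint_descendants c1 c2 x y :
  c1 \in children r par x -> c2 \in children r par x ->
  anc c1 y -> anc c2 y -> c1 = c2.
Proof.
move=> ch1 ch2 anc1 anc2.
wlog anc12 : c1 c2 ch1 ch2 anc1 anc2 / anc c1 c2.
  by move=> sym; case: (ancestor_total anc1 anc2) => [|/sym-> //]; apply: sym.
have [//|/eqP neq12] := eqVneq c1 c2; case: (child_not_ancestor ch1).
move: ch2; rewrite inE => /andP[/eqP <- _]; exact: ancestor_par_strict.
Qed.

End RootedTree.

Section Separation.
Variables (T : finType) (r : T) (par : T -> T).
Local Notation anc := (ancestor par).

Definition descendants (c : T) : {set T} := [set y | fconnect par y c].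

Definition separates (c a b : T) : bool :=
  (a \in descendants c) != (b \in descendants c).

Lemma separates_sym c a b : separates c a b = separates c b a.
Proof. by rewrite /separates eq_sym. Qed.

Lemma mem_descendants c y : reflect (anc c y) (y \in descendants c).
Proof. by rewrite inE; apply: ancestorP. Qed.

Lemma separatesP c a b : separates c a b ->
  (anc c a /\ ~ anc c b) \/ (anc c b /\ ~ anc c a).
Proof.
rewrite /separates.
by case: mem_descendants => ca; case: mem_descendants => cb //= _; [left|right].
Qed.

Lemma separatesI c a b : anc c a -> ~ anc c b -> separates c a b.
Proof. by rewrite /separates => /mem_descendants-> /mem_descendants/negbTE->. Qed.

Lemma is_lca_sym s a b : is_lca par s a b -> is_lca par s b a.
Proof.
by case=> sa [sb lca_s]; split; last split=> // z zb za; last apply: lca_s.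
Qed.

Lemma on_path_sym a b x : on_path par a b x -> on_path par b a x.
Proof.
by case=> ab_x lca_x; split=> [|z zb za]; [case: ab_x; by [right|left] | apply: lca_x].
Qed.

Lemma on_path_separates c a b : separates c a b -> on_path par a b (par c).
Proof.
move=> sep; wlog [ca not_cb] : a b {sep} / anc c a /\ ~ anc c b.
  by move=> sym; case/separatesP: sep => /sym // /on_path_sym.
split=> [|z za zb]; first by left; apply: ancestor_trans (ancestor_par par c) ca.
case: (ancestor_total za ca) => [zc|cz]; last by case: not_cb; apply: ancestor_trans zb.
by apply: ancestor_par_strict zc _ => eq_zc; case: not_cb; rewrite -eq_zc.
Qed.

Lemma lca_above_separating s c a b :
  is_lca par s a b -> separates c a b -> anc s (par c).
Proof.
move=> lca_s sep; wlog [ca not_cb] : a b lca_s {sep} / anc c a /\ ~ anc c b.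
  by move=> sym; case/separatesP: sep => /sym; apply=> //; apply: is_lca_sym.
case: lca_s => sa [sb _]; case: (ancestor_total sa ca) => [sc|cs].
  by apply: ancestor_par_strict sc _ => eq_sc; case: not_cb; rewrite -eq_sc.
by case: not_cb; apply: ancestor_trans sb.
Qed.

Hypothesis tree : rooted_tree r par.

Lemma child_ancestor c v y : c \in children r par v -> anc c y -> anc v y.
Proof.
by rewrite inE => /andP[/eqP <- _]; apply: ancestor_trans (ancestor_par par c).
Qed.

Lemma parent_of_separating_children v c1 c2 a b :
  c1 \in children r par v -> c2 \in children r par v -> c1 != c2 ->
  separates c1 a b -> separates c2 a b -> anc v a /\ anc v b.
Proof.
move=> ch1 ch2 /eqP neq12 sep1 sep2.
wlog [c1a not_c1b] : a b sep1 sep2 / anc c1 a /\ ~ anc c1 b.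
  move=> sym; case/separatesP: (sep1) => [c1ab|c1ba]; first exact: sym.
  by case: (sym b a) => //; rewrite separates_sym.
have c2b : anc c2 b.
  case/separatesP: sep2 => [[c2a _]|[//]].
  by case: neq12; apply: (children_disjoint_descendants tree) ch1 ch2 c1a c2a.
by split; [apply: child_ancestor ch1 c1a | apply: child_ancestor ch2 c2b].
Qed.

Lemma lca_at_separating_children s v c1 c2 a b :
  is_lca par s a b -> c1 \in children r par v -> c2 \in children r par v ->
  c1 != c2 -> separates c1 a b -> separates c2 a b -> s = v.
Proof.
move=> lca_s ch1 ch2 neq12 sep1 sep2; apply: (ancestor_antisym tree).
  have := lca_above_separating lca_s sep1.
  by move: ch1; rewrite inE => /andP[/eqP ->].
case: (parent_of_separating_children ch1 ch2 neq12 sep1 sep2) => va vb.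
by case: lca_s => _ [_]; apply.
Qed.

Lemma lca_separating_child v a b : is_lca par v a b -> v <> a ->
  exists2 c, c \in children r par v & anc c a /\ ~ anc c b.
Proof.
case=> va [vb lca_v] neq_va; have [c ch ca] := child_toward r va neq_va.
by exists c => //; split=> // cb; apply: (child_not_ancestor tree ch); apply: lca_v.
Qed.

End Separation.

Definition imbalanced (T : finType) (par : T -> T) (A B : {set T}) (c : T) :=
  #|A :&: descendants par c| != #|B :&: descendants par c|.

Definition doubly_imbalanced (T : finType) (r : T) (par : T -> T) (A B : {set T}) :=
  [set v | [exists c1, exists c2, [&& c1 \in children r par v, c2 \in children r par v,
     c1 != c2, imbalanced par A B c1 & imbalanced par A B c2]]].

Section Identification.
Variables (T : finType) (r : T) (par : T -> T) (pi sigma : T -> T) (S : {set T}).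
Hypotheses (tree : rooted_tree r par) (ident : pair_identifies r par pi sigma S).

Definition crossing c := [set s in S | separates par c (pi s) (sigma s)].

Lemma crossing_card_le1 c : #|crossing c| <= 1.
Proof.
apply/card_le1_eqP => s1 s2; rewrite !inE => /andP[s1S sep1] /andP[s2S sep2].
case: ident => _ [_ [_ [_ [_ unique_request]]]].
by apply: (unique_request (par c)) => //; apply: on_path_separates.
Qed.

Lemma crossing_neq0 c :
  (crossing c != set0) = imbalanced par (pi @: S) (sigma @: S) c.
Proof.
case: ident => _ [_ [inj_pi [inj_sigma _]]].
pose below f := [set s in S | f s \in descendants par c].
have symdiffE : below pi :\: below sigma :|: (below sigma :\: below pi) = crossing c.
  apply/setP => s; rewrite !inE /separates !inE.
  by case: (s \in S); case: (fconnect par (pi s) c); case: (fconnect par (sigma s) c).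
by rewrite /imbalanced !card_imsetI // cards_neq_symdiff symdiffE ?crossing_card_le1.
Qed.

Hypothesis inner : S \subset ~: leaves r par.

Lemma identified_doubly_imbalanced :
  S = doubly_imbalanced r par (pi @: S) (sigma @: S).
Proof.
case: ident => leaf_pi [leaf_sigma [_ [_ [lca unique_request]]]].
apply/setP => v; rewrite inE; apply/idP/existsP => [vS|[c1 /existsP[c2]]].
  have not_leaf u : u \in leaves r par -> v <> u.
    by move=> leaf_u eq_vu; move: (subsetP inner v vS); rewrite inE eq_vu leaf_u.
  have [c1 ch1 [c1a not_c1b]] :=
    lca_separating_child tree (lca v vS) (not_leaf _ (leaf_pi v vS)).
  have [c2 ch2 [c2b not_c2a]] :=
    lca_separating_child tree (is_lca_sym (lca v vS)) (not_leaf _ (leaf_sigma v vS)).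
  exists c1; apply/existsP; exists c2; rewrite ch1 ch2 -!crossing_neq0 /=.
  apply/and3P; split; first by apply/eqP => eq12; apply: not_c2a; rewrite -eq12.
    by apply/set0Pn; exists v; rewrite inE vS separatesI.
  by apply/set0Pn; exists v; rewrite inE vS separates_sym separatesI.
rewrite -!crossing_neq0 => /and5P[ch1 ch2 neq12 /set0Pn[s1 cross1] /set0Pn[s2 cross2]].
move: cross1 cross2; rewrite !inE => /andP[s1S sep1] /andP[s2S sep2].
have path_v (c s : T) : c \in children r par v -> separates par c (pi s) (sigma s) ->
    on_path par (pi s) (sigma s) v.
  by rewrite inE => /andP[/eqP <- _]; apply: on_path_separates.
have eq_s12 : s1 = s2.
  by apply: (unique_request v) => //; [apply: path_v ch1 sep1 | apply: path_v ch2 sep2].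
subst s2; have lca_s1 := lca s1 s1S.
by rewrite -(lca_at_separating_children tree lca_s1 ch1 ch2 neq12 sep1 sep2).
Qed.

End Identification.

Lemma identified_setE (T : finType) (r : T) (par : T -> T) (A B S : {set T}) :
  rooted_tree r par -> S \subset ~: leaves r par -> sets_identify r par A B S ->
  S = doubly_imbalanced r par A B.
Proof.
by move=> tree inner [pi [sigma [ident [<- <-]]]]; apply: identified_doubly_imbalanced.
Qed.

Theorem lemma3p6 (T : finType) (r : T) (par : T -> T)
  (A B S S' : {set T}) :
  rooted_tree r par -> inner_branching r par ->
  A \subset leaves r par -> B \subset leaves r par -> [disjoint A & B] ->
  S \subset ~: leaves r par -> S' \subset ~: leaves r par ->
  sets_identify r par A B S -> sets_identify r par A B S' ->
  S = S'.
Proof.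
move=> tree _ _ _ _ inner inner' ident ident'.
by rewrite (identified_setE tree inner ident) (identified_setE tree inner' ident').
Qed.
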